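(* If $b > a \geq 2$, then $I_{a,b} \geq P_a(a+b-1) \cdot P_b(a+b-1)$.
   Context: $K_{a,b}$ is the complete bipartite graph with partite sets of sizes $a$ and $b$. $I_{a,b}$ denotes the number of isomorphism classes (as unlabeled graphs) of spanning trees of $K_{a,b}$. $P_k(m)$ denotes the number of integer partitions of $m$ into exactly $k$ positive parts. *)

From mathcomp Require Import all_boot.
From mathcomp Require Import fingroup perm boolp.
Set Implicit Arguments. Unset Strict Implicit. Unset Printing Implicit Defensive.

Definition Kvert (a b : nat) : finType := ('I_a + 'I_b)%type.

(* A subgraph of K_{a,b} on all vertices is given by its edge set, a subset of
   the edge set 'I_a * 'I_b of K_{a,b} (edge (i,j) joins inl i and inr j). *)
Definition Kedges (a b : nat) : finType := ('I_a * 'I_b)%type.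

Definition adjK (a b : nat) (E : {set Kedges a b}) : rel (Kvert a b) :=
  fun u v =>
    match u, v with
    | inl i, inr j => (i, j) \in E
    | inr j, inl i => (i, j) \in E
    | _, _ => false
    end.

Definition connected_graph (V : finType) (e : rel V) : bool :=
  [forall u, forall v, connect e u v].

Definition acyclic_graph (V : finType) (e : rel V) : Prop :=
  forall c : seq V, 2 < size c -> ~~ ucycleb e c.

Definition is_tree (V : finType) (e : rel V) : Prop :=
  connected_graph e /\ acyclic_graph e.

Definition spanning_tree (a b : nat) (E : {set Kedges a b}) : Prop :=
  is_tree (adjK E).

(* isomorphism as unlabeled graphs: a bijection of the whole vertex set
   (not required to preserve the bipartition) preserving adjacency *)
Definition graph_iso (V : finType) (e1 e2 : rel V) : Prop :=
  exists f : {perm V}, forall u v, e1 u v = e2 (f u) (f v).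

Definition Iab (a b : nat) : nat :=
  #|[set [set E' : {set Kedges a b} | `[< spanning_tree E' >] &&
                                      `[< graph_iso (adjK E) (adjK E') >]]
     | E : {set Kedges a b} in [set E | `[< spanning_tree E >]]]|.

Definition Ppart (k m : nat) : nat :=
  #|[set t : k.-tuple 'I_m.+1 |
      [&& sorted geq (map val t), all (fun x : 'I_m.+1 => 0 < val x) t
        & sumn (map val t) == m]]|.

From mathcomp Require Import all_boot.
From mathcomp Require Import fingroup perm boolp zify.
Set Implicit Arguments. Unset Strict Implicit. Unset Printing Implicit Defensive.

(* In a spanning tree of K_{a,b} (which has a + b - 1 edges) the degrees of
   the A-vertices form a partition of a + b - 1 into a parts, and those of the
   B-vertices one into b parts.  Every such pair (p, q) of partitions is
   realised by a tree: root it at a B-vertex and number the vertices so that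
   children come in consecutive blocks, in order of nonincreasing degree;
   then a parent always precedes its children.  An isomorphism of trees
   preserves degrees and, as a tree is connected and a < b, it maps each side
   of the bipartition onto itself; so the trees realising different pairs
   (p, q) are pairwise non-isomorphic. *)

Section ParentTree.

Variables (V : finType) (e : rel V) (root : V) (parent : V -> V) (rank : V -> nat).
Hypothesis rank_parent : forall v, v != root -> rank (parent v) < rank v.
Hypothesis edge_parent : forall u v,
  e u v = (u != root) && (parent u == v) || (v != root) && (parent v == u).

Lemma connect_root v : connect e v root.
Proof.
elim: {v}(rank v).+1 {-2}v (ltnSn (rank v)) => // n IHn v rank_v.
have [-> | v_root] := eqVneq v root; first exact: connect0.
apply: (connect_trans (connect1 (_ : e v (parent v)))) (IHn _ _).
  by rewrite edge_parent v_root eqxx.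
exact: leq_trans (rank_parent v_root) rank_v.
Qed.

Lemma parent_connected : connected_graph e.
Proof.
have e_sym : symmetric e by move=> u v; rewrite !edge_parent orbC.
apply/forallP => u; apply/forallP => v.
by rewrite (connect_trans (connect_root u)) // (sym_connect_sym e_sym) connect_root.
Qed.

(* A vertex of maximal rank on a cycle can only be joined to its parent. *)
Lemma parent_acyclic : acyclic_graph e.
Proof.
move=> c size_c; apply/negP => /andP[cycle_c uniq_c].
have c_v0 : head root c \in c by case: (c) size_c => // ? ?; rewrite mem_head.
have [v c_v max_v] := arg_maxnP rank c_v0.
have nbr_parent w : w \in c -> e v w -> w = parent v.
  move=> c_w; rewrite edge_parent => /orP[/andP[_ /eqP //] | /andP[w_root /eqP vE]].
  by have := max_v w c_w; rewrite /= -vE leqNgt rank_parent.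
case: (rot_to c_v) => i s c_rot.
have := rot_cycle i e c; rewrite c_rot cycle_c.
have := rot_uniq i c; rewrite c_rot uniq_c.
have := mem_rot i c; rewrite c_rot => c_s.
have := size_rot i c; rewrite c_rot.
case: s {c_rot} c_s => [|w1 [|w2 s]] c_s /=; try by move=> sz; move: size_c; rewrite -sz.
move=> _ /and4P[_ w1_s _ _] /and3P[vw1 _]; rewrite rcons_path => /andP[_ wv].
have c_w1 : w1 \in c by rewrite -c_s !inE eqxx orbT.
set w := last w2 s in wv.
have w_c : w \in c by rewrite -c_s; apply/mem_behead/mem_behead/mem_last.
have vw : e v w by rewrite edge_parent orbC -edge_parent.
by move: w1_s; rewrite (nbr_parent w1 c_w1 vw1) -(nbr_parent w w_c vw) mem_last.
Qed.

Lemma parent_tree : is_tree e.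
Proof. by split; [exact: parent_connected | exact: parent_acyclic]. Qed.

End ParentTree.

Fixpoint runs (cs : seq nat) (k : nat) : seq nat :=
  if cs is c :: cs' then nseq c k ++ runs cs' k.+1 else [::].

Lemma size_runs cs k : size (runs cs k) = sumn cs.
Proof. by elim: cs k => //= c cs IHcs k; rewrite size_cat size_nseq IHcs. Qed.

Lemma count_runs cs k x :
  count_mem x (runs cs k) = if k <= x then nth 0 cs (x - k) else 0.
Proof.
elim: cs k => [|c cs IHcs] k /=; first by rewrite nth_nil if_same.
rewrite count_cat count_nseq IHcs /=.
case: (ltngtP k x) => [k_lt_x | x_lt_k | <-]; rewrite ?subnn //=; last lia.
by rewrite subnS -(subnSK k_lt_x) mul0n.
Qed.

Lemma nth_runs_gt0 cs t : t < sumn cs -> 0 < nth 0 cs (nth 0 (runs cs 0) t).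
Proof.
move=> lt_t; have := count_runs cs 0 (nth 0 (runs cs 0) t); rewrite leq0n subn0 => <-.
by rewrite -has_count has_pred1 mem_nth // size_runs.
Qed.

Lemma nth_runs_lt cs k t x : t < sumn cs ->
  (nth 0 (runs cs k) t < x) = (t < sumn (take (x - k) cs)).
Proof.
elim: cs k t => [|c cs IHcs] k t //= t_lt.
rewrite nth_cat size_nseq.
have [k_x | x_k] := ltnP k x; last first.
  rewrite (_ : x - k = 0) /= ?ltn0; last lia.
  case: (ltnP t c) => [t_c | c_t]; first by rewrite nth_nseq t_c ltnNge x_k.
  rewrite IHcs; last lia.
  by rewrite (_ : x - k.+1 = 0) ?take0 //; lia.
rewrite -(subnSK k_x) /=.
case: (ltnP t c) => [t_c | c_t]; first by rewrite nth_nseq t_c k_x ltn_addr.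
rewrite IHcs; last lia.
by rewrite ltn_subLR.
Qed.

Lemma sumn_predn s : all (leq 1) s -> sumn (map predn s) + size s = sumn s.
Proof. by elim: s => //= x s IHs /andP[x_gt0 /IHs <-]; lia. Qed.

Lemma path_geq_le_head x s : path geq x s -> all (geq x) s.
Proof. by apply: order_path_min => u v w /= vu wv; exact: leq_trans wv vu. Qed.

Lemma sumn_take_predn_min s i : sorted geq s -> all (leq 1) s ->
  minn i (sumn (map predn s)) <= sumn (take i (map predn s)).
Proof.
elim: s i => [|x s IHs] [|i] //= s_sorted /andP[x_gt0 s_gt0]; first by rewrite min0n.
have := IHs i (path_sorted s_sorted) s_gt0.
case: x x_gt0 s_sorted => [|[|x]] //= _ s_sorted; last lia.
suff -> : sumn (map predn s) = 0 by lia.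
have /allP s_le1 := path_geq_le_head s_sorted.
have : all (pred1 1) s.
  apply/allP => y s_y /=; have := allP s_gt0 y s_y; have := s_le1 y s_y; rewrite /=; lia.
by elim: (s) => //= y s' IHs' /andP[/eqP-> /IHs'->].
Qed.

Lemma sumn_take_predn_ge s k : sorted geq s -> 2 <= nth 0 s k ->
  k <= sumn (take k (map predn s)).
Proof.
elim: s k => [|x s IHs] [|k] //= s_sorted sk_ge2.
have k_lt : k < size s by case: (ltnP k (size s)) sk_ge2 => // s_k; rewrite nth_default.
have := IHs k (path_sorted s_sorted) sk_ge2.
have /allP/(_ _ (mem_nth 0 k_lt)) /= := path_geq_le_head s_sorted; lia.
Qed.

Definition partition_of (k m : nat) (s : seq nat) : bool :=
  [&& size s == k, sorted geq s, all (leq 1) s & sumn s == m].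

Definition degree (a b : nat) (E : {set Kedges a b}) (v : Kvert a b) : nat :=
  #|[set w | adjK E v w]|.

Lemma degree_inl a b (E : {set Kedges a b}) (i : 'I_a) :
  degree E (inl i) = #|[set j | (i, j) \in E]|.
Proof.
rewrite /degree -(card_imset [set j | (i, j) \in E] (@inr_inj 'I_a 'I_b)).
apply: eq_card => -[i' | j]; rewrite !inE /=.
  by apply/esym/imsetP => -[].
by rewrite (mem_imset _ _ (@inr_inj _ _)) inE.
Qed.

Lemma degree_inr a b (E : {set Kedges a b}) (j : 'I_b) :
  degree E (inr j) = #|[set i | (i, j) \in E]|.
Proof.
rewrite /degree -(card_imset [set i | (i, j) \in E] (@inl_inj 'I_a 'I_b)).
apply: eq_card => -[i | j']; rewrite !inE /=.
  by rewrite (mem_imset _ _ (@inl_inj _ _)) inE.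
by apply/esym/imsetP => -[].
Qed.

Lemma card_ord_pred n (P : pred nat) : #|[set i : 'I_n | P i]| = count P (iota 0 n).
Proof. by rewrite cardsE cardE /enum_mem size_filter -enumT -val_enum_ord count_map. Qed.

Lemma count_nth_iota (s : seq nat) (P : pred nat) :
  count (fun j => P (nth 0 s j)) (iota 0 (size s)) = count P s.
Proof. by rewrite -[in RHS](mkseq_nth 0 s) count_map. Qed.

Lemma count_eq_iota k n : count (fun m => k == m) (iota 0 n) = (k < n).
Proof.
rewrite (eq_count (a2 := pred1 k)) => [|m]; last exact: eq_sym.
by rewrite count_uniq_mem ?iota_uniq // mem_iota.
Qed.

Lemma count_predU_disjoint (A B : pred nat) (s : seq nat) :
  {in s, forall x, A x -> B x = false} ->
  count (fun x => A x || B x) s = count A s + count B s.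
Proof.
move=> AB; rewrite -count_predUI (@eq_in_count _ (predI A B) pred0) ?count_pred0 ?addn0 //.
by move=> x s_x /=; case A_x: (A x); rewrite //= (AB x s_x A_x).
Qed.

Section DegreeTree.

Variables (a b : nat) (p q : seq nat).

(* The tree rooted at B-vertex 0: the root has the A-children 0, ..., q_0 - 1,
   B-vertex j > 0 the next q_j - 1 A-vertices, and A-vertex i the next
   p_i - 1 B-vertices, counting from B-vertex 1.  [parentB 0 = a] is a junk
   value, chosen so that B-vertex 0 is nobody's child. *)
Definition a_counts := head 0 q :: map predn (behead q).
Definition b_counts := map predn p.

Definition parentA (i : nat) : nat := nth 0 (runs a_counts 0) i.
Definition parentB (j : nat) : nat := nth 0 (a :: runs b_counts 0) j.

Definition degree_tree : {set Kedges a b} :=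
  [set e : Kedges a b | (parentA e.1 == e.2) || (parentB e.2 == e.1)].

Hypothesis b_gt0 : 0 < b.
Hypothesis p_part : partition_of a (a + b - 1) p.
Hypothesis q_part : partition_of b (a + b - 1) q.

Let size_p : size p = a. Proof. by case/and4P: p_part => /eqP. Qed.
Let sorted_p : sorted geq p. Proof. by case/and4P: p_part. Qed.
Let pos_p : all (leq 1) p. Proof. by case/and4P: p_part. Qed.
Let sumn_p : sumn p = a + b - 1. Proof. by case/and4P: p_part => _ _ _ /eqP. Qed.
Let size_q : size q = b. Proof. by case/and4P: q_part => /eqP. Qed.
Let sorted_q : sorted geq q. Proof. by case/and4P: q_part. Qed.
Let pos_q : all (leq 1) q. Proof. by case/and4P: q_part. Qed.
Let sumn_q : sumn q = a + b - 1. Proof. by case/and4P: q_part => _ _ _ /eqP. Qed.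

Lemma size_a_counts : size a_counts = b.
Proof. by move: b_gt0; rewrite -size_q /a_counts; case: (q) => //= x s _; rewrite size_map. Qed.

Lemma sumn_a_counts : sumn a_counts = a.
Proof.
move: b_gt0 size_q pos_q sumn_q; rewrite /a_counts; case: (q) => [|x s] /=; first lia.
by move=> _ size_s /andP[_ /sumn_predn]; lia.
Qed.

Lemma sumn_b_counts : sumn b_counts = b.-1.
Proof. by have := sumn_predn pos_p; rewrite /b_counts size_p sumn_p; lia. Qed.

Lemma parentA_lt i : i < a -> parentA i < b.
Proof.
move=> lt_ia; rewrite /parentA nth_runs_lt ?sumn_a_counts // subn0.
by rewrite take_oversize ?size_a_counts ?sumn_a_counts.
Qed.

Lemma parentB_lt j : 0 < j -> j < b -> parentB j < a.
Proof.
case: j => [|j] //= _ lt_jb; rewrite /parentB /= nth_runs_lt ?sumn_b_counts; last lia.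
by rewrite subn0 take_oversize ?sumn_b_counts ?size_map ?size_p; lia.
Qed.

Lemma parentA_le i : i < a -> parentA i <= i.
Proof.
move=> lt_ia; have lt_i_sum : i < sumn a_counts by rewrite sumn_a_counts.
have := nth_runs_lt 0 (parentA i) lt_i_sum; rewrite ltnn subn0 => /esym/negbT.
have := nth_runs_gt0 lt_i_sum; rewrite -leqNgt -/(parentA i).
case: (parentA i) => [//|j]; move: sorted_q pos_q; rewrite /a_counts.
case: (q) => [|x s] /=; first by move=> _ _; case: j.
move=> /path_sorted sorted_s /andP[x_gt0 _] s_j.
have s_j_ge2 : 2 <= nth 0 s j.
  case: (ltnP j (size s)) s_j => [j_lt | j_ge]; last by rewrite nth_default ?size_map.
  by rewrite (nth_map 0) //; lia.
have := sumn_take_predn_ge sorted_s s_j_ge2; lia.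
Qed.

Lemma parentB_lt_of_le j i : 0 < j -> j <= i -> j < b -> parentB j < i.
Proof.
case: j => [//|j] _ le_ji lt_jb; rewrite /parentB /= nth_runs_lt ?sumn_b_counts; last lia.
by have := sumn_take_predn_min i sorted_p pos_p; rewrite -/b_counts sumn_b_counts subn0; lia.
Qed.

Lemma parentBA_lt i : i < a -> 0 < parentA i -> parentB (parentA i) < i.
Proof.
by move=> lt_ia pos; apply: parentB_lt_of_le; rewrite ?parentA_le ?parentA_lt.
Qed.

Definition tree_root : Kvert a b := inr (Ordinal b_gt0).

Definition tree_parent (v : Kvert a b) : Kvert a b :=
  match v with
  | inl i => if insub (parentA i) is Some j then inr j else v
  | inr j => if insub (parentB j) is Some i then inl i else v
  end.
Arguments tree_parent : simpl never.

Definition tree_rank (v : Kvert a b) : nat :=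
  match v with
  | inl i => (2 * i).+1
  | inr j => if val j == 0 then 0 else (2 * parentB j).+2
  end.

Lemma tree_parent_inl (i : 'I_a) :
  tree_parent (inl i) = inr (Ordinal (parentA_lt (ltn_ord i))).
Proof. by rewrite /tree_parent /= (insubT (fun j => j < b) (parentA_lt (ltn_ord i))). Qed.

Lemma tree_parent_inr (j : 'I_b) (j_gt0 : 0 < j) :
  tree_parent (inr j) = inl (Ordinal (parentB_lt j_gt0 (ltn_ord j))).
Proof. by rewrite /tree_parent /= (insubT (fun i => i < a) (parentB_lt j_gt0 (ltn_ord j))). Qed.

Lemma tree_root_inr (j : 'I_b) : (inr j == tree_root) = (val j == 0).
Proof. by []. Qed.

Lemma degree_tree_edge (i : 'I_a) (j : 'I_b) : ((i, j) \in degree_tree) =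
  (tree_parent (inl i) == inr j) || (inr j != tree_root) && (tree_parent (inr j) == inl i).
Proof.
rewrite inE tree_parent_inl tree_root_inr; congr (_ || _).
have [j0 | j_gt0] := posnP j; last by rewrite tree_parent_inr.
by rewrite j0 /parentB /= eqn_leq leqNgt ltn_ord.
Qed.

Lemma adjK_degree_tree u v : adjK degree_tree u v =
  (u != tree_root) && (tree_parent u == v) || (v != tree_root) && (tree_parent v == u).
Proof.
have inr_parent (j j' : 'I_b) : (inr j != tree_root) && (tree_parent (inr j) == inr j') = false.
  by rewrite tree_root_inr; have [//|j_gt0] := posnP j; rewrite tree_parent_inr.
case: u => [i|j]; case: v => [i'|j'] /=;
  by rewrite ?degree_tree_edge ?inr_parent ?tree_parent_inl // orbC.
Qed.

Lemma tree_rank_parent v : v != tree_root -> tree_rank (tree_parent v) < tree_rank v.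
Proof.
case: v => [i _ | j]; first rewrite tree_parent_inl /=.
  have [//|pos] := posnP (parentA i); have := parentBA_lt (ltn_ord i) pos; lia.
by rewrite tree_root_inr -lt0n => j_gt0; rewrite tree_parent_inr /= (gtn_eqF j_gt0).
Qed.

Lemma degree_tree_spanning : spanning_tree degree_tree.
Proof. exact: parent_tree tree_rank_parent adjK_degree_tree. Qed.

Lemma parent_edges_disjoint i j : i < a -> parentA i == j -> parentB j == i = false.
Proof.
move=> lt_ia /eqP <-; apply/negbTE; rewrite neq_ltn.
have [-> | pos] := posnP (parentA i); first by rewrite /parentB /= lt_ia orbT.
by rewrite parentBA_lt.
Qed.

Lemma count_parentA j : count (fun i => parentA i == j) (iota 0 a) = nth 0 a_counts j.
Proof.
have size_runs_a : size (runs a_counts 0) = a by rewrite size_runs sumn_a_counts.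
by rewrite -{1}size_runs_a /parentA (count_nth_iota _ (pred1 j)) count_runs subn0.
Qed.

Lemma count_parentB i : i < a -> count (fun j => parentB j == i) (iota 0 b) = (nth 0 p i).-1.
Proof.
move=> lt_ia; have size_list : size (a :: runs b_counts 0) = b.
  by rewrite /= size_runs sumn_b_counts prednK.
rewrite -{1}size_list /parentB (count_nth_iota _ (pred1 i)) /= count_runs subn0.
rewrite (nth_map 0) ?size_p //.
by rewrite eqn_leq leqNgt lt_ia.
Qed.

Lemma degree_tree_inl (i : 'I_a) : degree degree_tree (inl i) = nth 0 p i.
Proof.
rewrite degree_inl; have -> : [set j | (i, j) \in degree_tree] =
    [set j : 'I_b | (parentA i == j) || (parentB j == i)] by apply/setP => j; rewrite !inE.
rewrite (card_ord_pred _ (fun j => (parentA i == j) || (parentB j == i))).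
rewrite count_predU_disjoint => [|j _]; last exact: parent_edges_disjoint.
rewrite count_eq_iota (parentA_lt (ltn_ord i)) count_parentB //.
have /allP/(_ (nth 0 p i)) := pos_p; rewrite mem_nth ?size_p //; lia.
Qed.

Lemma degree_tree_inr (j : 'I_b) : degree degree_tree (inr j) = nth 0 q j.
Proof.
rewrite degree_inr; have -> : [set i | (i, j) \in degree_tree] =
    [set i : 'I_a | (parentA i == j) || (parentB j == i)] by apply/setP => i; rewrite !inE.
rewrite (card_ord_pred _ (fun i => (parentA i == j) || (parentB j == i))).
rewrite count_predU_disjoint => [|i]; last by rewrite mem_iota; exact: parent_edges_disjoint.
rewrite count_parentA (count_eq_iota (parentB j)).
have [j0 | j_gt0] := posnP j; first by rewrite j0 /parentB /= ltnn addn0; case: (q).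
rewrite parentB_lt ?ltn_ord // /a_counts.
move: size_q pos_q (ltn_ord j); case: (val j) j_gt0 => [//|j'] _.
case: (q) => [|x s] /=; first lia.
move=> size_s /andP[_ pos_s] lt_jb; have lt_js : j' < size s by lia.
by have := allP pos_s _ (mem_nth 0 lt_js); rewrite (nth_map 0) //=; lia.
Qed.

Lemma degree_tree_inl_seq : [seq degree degree_tree (inl i) | i <- enum 'I_a] = p.
Proof.
rewrite (eq_map degree_tree_inl) (map_comp (nth 0 p) val) val_enum_ord -size_p.
exact: mkseq_nth.
Qed.

Lemma degree_tree_inr_seq : [seq degree degree_tree (inr j) | j <- enum 'I_b] = q.
Proof.
rewrite (eq_map degree_tree_inr) (map_comp (nth 0 q) val) val_enum_ord -size_q.
exact: mkseq_nth.
Qed.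

End DegreeTree.

Lemma adjK_sides a b (E : {set Kedges a b}) u v : adjK E u v -> is_inl u != is_inl v.
Proof. by case: u; case: v. Qed.

Lemma graph_iso_sides a b (E E' : {set Kedges a b}) (f : {perm Kvert a b}) :
  0 < a < b -> connected_graph (adjK E) ->
  (forall u v, adjK E u v = adjK E' (f u) (f v)) -> forall v, is_inl (f v) = is_inl v.
Proof.
move=> /andP[a_gt0 lt_ab] conn iso.
pose kept v := is_inl (f v) == is_inl v.
have kept_closed : closed (adjK E) kept.
  move=> u v Euv; have := adjK_sides Euv; have := adjK_sides (etrans (esym (iso u v)) Euv).
  by rewrite !unfold_in /kept; case: (is_inl u) (is_inl v) (is_inl (f u)) (is_inl (f v)) => [] [] [] [].
pose v0 : Kvert a b := inl (Ordinal a_gt0).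
have kept_v0 v : kept v = kept v0.
  by apply/esym/(closed_connect kept_closed); move/forallP/(_ v0)/forallP: conn; apply.
case kept0: (kept v0); first by move=> v; apply/eqP; rewrite -/(kept v) kept_v0.
pose h (j : 'I_b) : 'I_a := if f (inr j) is inl i then i else Ordinal a_gt0.
suff /leq_card : injective h by rewrite !card_ord leqNgt lt_ab.
have f_inr j : f (inr j) = inl (h j).
  by rewrite /h; move: (kept_v0 (inr j)); rewrite kept0 /kept; case: (f (inr j)).
by move=> j j' hjj'; apply: inr_inj; apply: (perm_inj (s := f)); rewrite !f_inr hjj'.
Qed.

Lemma degree_iso a b (E E' : {set Kedges a b}) (f : {perm Kvert a b}) :
  (forall u v, adjK E u v = adjK E' (f u) (f v)) -> forall v, degree E v = degree E' (f v).
Proof.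
move=> iso v; rewrite /degree -[in RHS](card_preimset _ (@perm_inj _ f)).
by apply: eq_card => w; rewrite !inE iso.
Qed.

Lemma perm_eq_map_inj (T : finType) (U : eqType) (g : T -> T) (h : T -> U) :
  injective g -> perm_eq [seq h (g x) | x <- enum T] [seq h x | x <- enum T].
Proof.
move=> g_inj; rewrite (map_comp h g); apply: perm_map; apply: uniq_perm.
- by rewrite (map_inj_uniq g_inj) enum_uniq.
- exact: enum_uniq.
- by move=> x; rewrite mem_enum; have := injF_onto g_inj x.
Qed.

Lemma perm_sum_inl (A B : finType) (f : {perm A + B}) :
  (forall v, is_inl (f v) = is_inl v) ->
  exists2 g : A -> A, injective g & forall x, f (inl x) = inl (g x).
Proof.
move=> f_sides; pose g x := if f (inl x) is inl y then y else x.
have fE x : f (inl x) = inl (g x) by rewrite /g; have := f_sides (inl x); case: (f (inl x)).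
by exists g => // x y gxy; apply: inl_inj; apply: (perm_inj (s := f)); rewrite !fE gxy.
Qed.

Lemma perm_sum_inr (A B : finType) (f : {perm A + B}) :
  (forall v, is_inl (f v) = is_inl v) ->
  exists2 g : B -> B, injective g & forall x, f (inr x) = inr (g x).
Proof.
move=> f_sides; pose g x := if f (inr x) is inr y then y else x.
have fE x : f (inr x) = inr (g x) by rewrite /g; have := f_sides (inr x); case: (f (inr x)).
by exists g => // x y gxy; apply: inr_inj; apply: (perm_inj (s := f)); rewrite !fE gxy.
Qed.

Lemma sorted_geq_eq (s1 s2 : seq nat) :
  sorted geq s1 -> sorted geq s2 -> perm_eq s1 s2 -> s1 = s2.
Proof.
apply: sorted_eq => [y x z /= yx zy | x y /andP[yx xy]]; first exact: leq_trans zy yx.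
by apply/anti_leq/andP.
Qed.

Lemma degree_tree_iso_inj a b p q p' q' :
  0 < a < b -> partition_of a (a + b - 1) p -> partition_of b (a + b - 1) q ->
  partition_of a (a + b - 1) p' -> partition_of b (a + b - 1) q' ->
  graph_iso (adjK (degree_tree a b p q)) (adjK (degree_tree a b p' q')) -> p = p' /\ q = q'.
Proof.
move=> ab pP qP p'P q'P [f iso].
have b_gt0 : 0 < b by case/andP: (ab); lia.
have [conn _] := degree_tree_spanning b_gt0 pP qP.
have sides := graph_iso_sides ab conn iso.
have [gA gA_inj fA] := perm_sum_inl sides.
have [gB gB_inj fB] := perm_sum_inr sides.
split; apply: sorted_geq_eq.
- by case/and4P: pP.
- by case/and4P: p'P.
- rewrite -(degree_tree_inl_seq b_gt0 pP qP) -(degree_tree_inl_seq b_gt0 p'P q'P).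
  rewrite (eq_map (fun i => degree_iso iso (inl i))) (eq_map (fun i => congr1 _ (fA i))).
  exact: (perm_eq_map_inj (fun i => degree _ (inl i)) gA_inj).
- by case/and4P: qP.
- by case/and4P: q'P.
- rewrite -(degree_tree_inr_seq b_gt0 pP qP) -(degree_tree_inr_seq b_gt0 p'P q'P).
  rewrite (eq_map (fun j => degree_iso iso (inr j))) (eq_map (fun j => congr1 _ (fB j))).
  exact: (perm_eq_map_inj (fun j => degree _ (inr j)) gB_inj).
Qed.

Lemma Iab_ge_card a b (T : finType) (S : {set T}) (tree : T -> {set Kedges a b}) :
  {in S, forall x, spanning_tree (tree x)} ->
  {in S &, forall x y, graph_iso (adjK (tree x)) (adjK (tree y)) -> x = y} ->
  #|S| <= Iab a b.
Proof.
move=> span iso_inj; rewrite /Iab.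
set cls := fun E => [set E' | _].
have self x : x \in S -> tree x \in cls (tree x).
  move=> Sx; rewrite inE; apply/andP; split; apply/asboolP; first exact: span.
  by exists 1%g => u v; rewrite !perm1.
rewrite -(card_in_imset (f := fun x => cls (tree x))) => [|x y Sx Sy cls_xy].
  apply: subset_leq_card; apply/subsetP => _ /imsetP[x Sx ->].
  by apply: imset_f; rewrite inE; apply/asboolP; exact: span.
apply: iso_inj => //.
by have := self y Sy; rewrite -cls_xy inE => /andP[_ /asboolP].
Qed.

Lemma partition_of_tuple k m (t : k.-tuple 'I_m.+1) :
  [&& sorted geq (map val t), all (fun x : 'I_m.+1 => 0 < val x) t & sumn (map val t) == m] =
  partition_of k m (map val t).
Proof. by rewrite /partition_of size_map size_tuple eqxx all_map. Qed.

Theorem theorem2p3 (a b : nat) :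
  2 <= a -> a < b -> Ppart a (a + b - 1) * Ppart b (a + b - 1) <= Iab a b.
Proof.
move=> a_ge2 lt_ab; have ab : 0 < a < b by rewrite lt_ab andbT ltnW.
have b_gt0 : 0 < b by lia.
rewrite /Ppart -cardsX.
pose m := a + b - 1.
pose tree (x : a.-tuple 'I_m.+1 * b.-tuple 'I_m.+1) := degree_tree a b (map val x.1) (map val x.2).
apply: (Iab_ge_card (tree := tree)).
  move=> [t1 t2]; rewrite in_setX !inE !partition_of_tuple => /andP[pP qP].
  exact: degree_tree_spanning b_gt0 pP qP.
move=> [t1 t2] [t1' t2']; rewrite !in_setX !inE !partition_of_tuple /=.
move=> /andP[pP qP] /andP[p'P q'P] /(degree_tree_iso_inj ab pP qP p'P q'P) [e1 e2].
by rewrite (val_inj (inj_map val_inj e1)) (val_inj (inj_map val_inj e2)).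
Qed.
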